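(* Consider the setting below. Fix an agent $i\in\mathcal I$ and a time $t\in\mathbb Z_+$ at which problem $\mathcal P_i(t)$ is feasible, and let $\bigl(\{x^{\mathrm n,\ast}_{i,(k|t)}\},\{u^{\mathrm n,\ast}_{i,(k|t)}\},\{x^{\mathrm c,\ast}_{i,(k|t)}\}_{k=0}^{N_{\mathrm c}},\{u^{\mathrm c,\ast}_{i,(k|t)}\}_{k=0}^{N_{\mathrm c}-1},\bar x^{\mathrm c,\ast}_i(t),\bar u^{\mathrm c,\ast}_i(t)\bigr)$ be the (optimal) feasible solution used in closed loop, so that $x_i(t+1)=f_i(x_i(t),u^{\mathrm c,\ast}_{i,(0|t)})$ and $S_i^\ast(t+1)$ is obtained from the freeze-or-shift rule. Define at time $t+1$ \[ \tilde x^{\mathrm c}_{i,(k|t+1)}:=x^{\mathrm c,\ast}_{i,(k+1|t)}\ (k=0,\dots,N_{\mathrm c}-1),\qquad \tilde u^{\mathrm c}_{i,(k|t+1)}:=u^{\mathrm c,\ast}_{i,(k+1|t)}\ (k=0,\dots,N_{\mathrm c}-2), \] \[ \tilde u^{\mathrm c}_{i,(N_{\mathrm c}-1|t+1)}:=\bar u^{\mathrm c,\ast}_i(t),\qquad \tilde x^{\mathrm c}_{i,(N_{\mathrm c}|t+1)}:=f_i\bigl(\tilde x^{\mathrm c}_{i,(N_{\mathrm c}-1|t+1)},\tilde u^{\mathrm c}_{i,(N_{\mathrm c}-1|t+1)}\bigr), \] \[ \tilde{\bar x}^{\mathrm c}_i(t+1):=\bar x^{\mathrm c,\ast}_i(t),\qquad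 \tilde{\bar u}^{\mathrm c}_i(t+1):=\bar u^{\mathrm c,\ast}_i(t). \] Then this candidate satisfies, at time $t+1$ (with data $x_i(t+1)$ and $S_i^\ast(t+1)=\mathbb B(c_i(t+1),R_i(t+1))$), all contingency-part constraints (C1)–(C8) of $\mathcal P_i(t+1)$ listed below, namely the contingency initialization, contingency dynamics, contingency state/input bounds, static-obstacle constraints, terminal-state and terminal-equilibrium constraints, terminal position constraint, active safe-set containment and tail-containment constraints.
   Context: Setting. Agents $\mathcal I=\{1,\dots,M\}$. Agent $i$ has dynamics $x_i(t+1)=f_i(x_i(t),u_i(t))$, $x_i\in\mathbb R^{n_i}$, $u_i\in\mathbb R^{m_i}$, admissible sets $\mathcal X_i\subset\mathbb R^{n_i}$, $\mathcal U_i\subset\mathbb R^{m_i}$, position $p_i=C_ix_i\in\mathbb R^{n_p}$, body radius $r_i>0$, body $\mathcal B_i(t)=\mathbb B(p_i(t),r_i)$ (closed Euclidean ball), reference state $x_i^{\mathrm{ref}}$. A deterministic safe-set generator $\Gamma_i$ assigns to each $x\in\mathcal X_i$ a ball $\Gamma_i(x)=\mathbb B(c_i(x),R_i(x))$. The active safe set at time $t$ is $S_i^\ast(t)=\mathbb B(c_i(t),R_i(t))$. $h:\mathbb R^{n_p}\to\mathbb R$ is a continuous obstacle function. Horizons $N_{\mathrm n},N_{\mathrm c}\in\mathbb Z_{>0}$. Costs: nominal stage and terminal costs $\ell_i^{\mathrm n},V_i^{\mathrm n}$, nonnegative offset cost $V_i^{\mathrm c}$, nonnegative contingency stage cost $\ell_i^{\mathrm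 c}$, weight $\gamma>0$. Problem $\mathcal P_i(t)$ (given $x_i(t)$, $S_i^\ast(t)$ and a bound $\hat J_i^{\mathrm c}(t)\ge0$): decision variables $x^{\mathrm n}_{i,(k|t)}$ ($k=0..N_{\mathrm n}$), $u^{\mathrm n}_{i,(k|t)}$ ($k=0..N_{\mathrm n}-1$), $x^{\mathrm c}_{i,(k|t)}$ ($k=0..N_{\mathrm c}$), $u^{\mathrm c}_{i,(k|t)}$ ($k=0..N_{\mathrm c}-1$), $\bar x^{\mathrm c}_i(t),\bar u^{\mathrm c}_i(t)$; write $p^\bullet_{i,(k|t)}=C_ix^\bullet_{i,(k|t)}$. Minimize $J_i=\sum_{k=0}^{N_{\mathrm n}-1}\ell_i^{\mathrm n}(x^{\mathrm n}_{i,(k|t)},u^{\mathrm n}_{i,(k|t)})+V_i^{\mathrm n}(x^{\mathrm n}_{i,(N_{\mathrm n}|t)},x_i^{\mathrm{ref}})+\gamma V_i^{\mathrm c}(\bar x^{\mathrm c}_i(t),x_i^{\mathrm{ref}})$ subject to: (N1) $x^{\mathrm n}_{i,(0|t)}=x_i(t)$; (N2) $u^{\mathrm n}_{i,(0|t)}=u^{\mathrm c}_{i,(0|t)}$; (N3) $x^{\mathrm n}_{i,(k+1|t)}=f_i(x^{\mathrm n}_{i,(k|t)},u^{\mathrm n}_{i,(k|t)})$, $x^{\mathrm n}_{i,(k+1|t)}\in\mathcal X_i$, $u^{\mathrm n}_{i,(k|t)}\in\mathcal U_i$ for $k=0..N_{\mathrm n}-1$; (C1) $x^{\mathrm c}_{i,(0|t)}=x_i(t)$;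 (C2) $x^{\mathrm c}_{i,(k+1|t)}=f_i(x^{\mathrm c}_{i,(k|t)},u^{\mathrm c}_{i,(k|t)})$ for $k=0..N_{\mathrm c}-1$; (C3) $x^{\mathrm c}_{i,(k+1|t)}\in\mathcal X_i$, $u^{\mathrm c}_{i,(k|t)}\in\mathcal U_i$ for $k=0..N_{\mathrm c}-1$; (C4) $h(p^{\mathrm c}_{i,(k|t)})\ge0$ for $k=0..N_{\mathrm c}$; (C5) $x^{\mathrm c}_{i,(N_{\mathrm c}|t)}=\bar x^{\mathrm c}_i(t)$, $\bar x^{\mathrm c}_i(t)=f_i(\bar x^{\mathrm c}_i(t),\bar u^{\mathrm c}_i(t))$, $(\bar x^{\mathrm c}_i(t),\bar u^{\mathrm c}_i(t))\in\mathcal X_i\times\mathcal U_i$; (C6) $C_i\bar x^{\mathrm c}_i(t)\in S_i^\ast(t)$; (C7) $\|p^{\mathrm c}_{i,(k|t)}-c_i(t)\|\le R_i(t)-r_i$ for $k=0..N_{\mathrm c}$; (C8) $\|p^{\mathrm c}_{i,(l|t)}-c_i(x^{\mathrm c}_{i,(k|t)})\|\le R_i(x^{\mathrm c}_{i,(k|t)})-r_i$ for all $0\le k\le l\le N_{\mathrm c}$; (L) $J_i^{\mathrm c}(t)\le\hat J_i^{\mathrm c}(t)$, where $J_i^{\mathrm c}(t):=\sum_{k=0}^{N_{\mathrm c}-1}\ell_i^{\mathrm c}(x^{\mathrm c}_{i,(k|t)}-\bar x^{\mathrm c}_i(t),u^{\mathrm c}_{i,(k|t)}-\bar u^{\mathrm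 c}_i(t))+V_i^{\mathrm c}(\bar x^{\mathrm c}_i(t),x_i^{\mathrm{ref}})$. Closed loop: at each $t$ each agent solves $\mathcal P_i(t)$, a star denotes the optimal solution, $J_i^{\mathrm c,\ast}(t)$ is $J_i^{\mathrm c}$ evaluated at it, the input $u_i(t)=u^{\mathrm c,\ast}_{i,(0|t)}=u^{\mathrm n,\ast}_{i,(0|t)}$ is applied and the state evolves exactly by $x_i(t+1)=f_i(x_i(t),u_i(t))$. Bound update: $\hat J_i^{\mathrm c}(t+1):=J_i^{\mathrm c,\ast}(t)-\ell_i^{\mathrm c}(x_i(t)-\bar x^{\mathrm c,\ast}_i(t),u_i(t)-\bar u^{\mathrm c,\ast}_i(t))$. Freeze-or-shift (FoS) update: $\tilde S_i(t+1):=\Gamma_i(x_i(t+1))$; $\chi_i(t)=1$ if some $j\neq i$ has $\tilde S_i(t+1)\cap\tilde S_j(t+1)\neq\emptyset$ or $\tilde S_i(t+1)\cap S_j^\ast(t)\neq\emptyset$, else $\chi_i(t)=0$; $S_i^\ast(t+1)=S_i^\ast(t)$ if $\chi_i(t)=1$ and $S_i^\ast(t+1)=\tilde S_i(t+1)$ if $\chi_i(t)=0$. *)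

From mathcomp Require Import all_boot all_order all_algebra.
From mathcomp Require Import reals.
Set Implicit Arguments. Unset Strict Implicit. Unset Printing Implicit Defensive.
Import Order.TTheory GRing.Theory Num.Theory.
Local Open Scope ring_scope.

Section Defs.
Variable R : realType.

Definition enorm d (v : 'cV[R]_d) : R := Num.sqrt (\sum_(j < d) (v j 0) ^+ 2).

Record ball (d : nat) := Ball { bcenter : 'cV[R]_d; bradius : R }.

Definition in_ball d (B : ball d) (p : 'cV[R]_d) : Prop :=
  enorm (p - bcenter B) <= bradius B.

Definition balls_meet d (B1 B2 : ball d) : Prop :=
  exists p, in_ball B1 p /\ in_ball B2 p.

Variables (n m np : nat).

(* Contingency constraints (C1)-(C8) of P_i(t), with data x0 = x_i(t),
   S = S_i^*(t); trajectories are indexed by nat, only k <= Nc matters. *)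
Record contingency_feasible
  (f : 'cV[R]_n -> 'cV[R]_m -> 'cV[R]_n) (C : 'M[R]_(np, n))
  (X : 'cV[R]_n -> Prop) (U : 'cV[R]_m -> Prop)
  (h : 'cV[R]_np -> R) (r : R) (Gamma : 'cV[R]_n -> ball np) (Nc : nat)
  (x0 : 'cV[R]_n) (S : ball np)
  (xc : nat -> 'cV[R]_n) (uc : nat -> 'cV[R]_m)
  (xbar : 'cV[R]_n) (ubar : 'cV[R]_m) : Prop := {
  C1 : xc 0%N = x0;
  C2 : forall k, (k < Nc)%N -> xc k.+1 = f (xc k) (uc k);
  C3 : forall k, (k < Nc)%N -> X (xc k.+1) /\ U (uc k);
  C4 : forall k, (k <= Nc)%N -> 0 <= h (C *m xc k);
  C5 : xc Nc = xbar /\ xbar = f xbar ubar /\ X xbar /\ U ubar;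
  C6 : in_ball S (C *m xbar);
  C7 : forall k, (k <= Nc)%N ->
         enorm (C *m xc k - bcenter S) <= bradius S - r;
  C8 : forall k l, (k <= l)%N -> (l <= Nc)%N ->
         enorm (C *m xc l - bcenter (Gamma (xc k))) <= bradius (Gamma (xc k)) - r
}.

Record nominal_feasible
  (f : 'cV[R]_n -> 'cV[R]_m -> 'cV[R]_n)
  (X : 'cV[R]_n -> Prop) (U : 'cV[R]_m -> Prop) (Nn : nat)
  (x0 : 'cV[R]_n) (xn : nat -> 'cV[R]_n) (un : nat -> 'cV[R]_m)
  (uc : nat -> 'cV[R]_m) : Prop := {
  N1 : xn 0%N = x0;
  N2 : un 0%N = uc 0%N;
  N3 : forall k, (k < Nn)%N ->
         xn k.+1 = f (xn k) (un k) /\ X (xn k.+1) /\ U (un k)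
}.

Definition Jc (lc : 'cV[R]_n -> 'cV[R]_m -> R) (Vc : 'cV[R]_n -> 'cV[R]_n -> R)
  (xref : 'cV[R]_n) (Nc : nat) (xc : nat -> 'cV[R]_n) (uc : nat -> 'cV[R]_m)
  (xbar : 'cV[R]_n) (ubar : 'cV[R]_m) : R :=
  \sum_(k < Nc) lc (xc k - xbar) (uc k - ubar) + Vc xbar xref.

Definition shift_x (f : 'cV[R]_n -> 'cV[R]_m -> 'cV[R]_n) (Nc : nat)
  (xc : nat -> 'cV[R]_n) (ubar : 'cV[R]_m) (k : nat) : 'cV[R]_n :=
  if (k < Nc)%N then xc k.+1 else f (xc Nc) ubar.

Definition shift_u (Nc : nat) (uc : nat -> 'cV[R]_m) (ubar : 'cV[R]_m)
  (k : nat) : 'cV[R]_m :=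
  if (k < Nc.-1)%N then uc k.+1 else ubar.

End Defs.

From mathcomp Require Import all_boot all_order all_algebra.
From mathcomp Require Import reals.
From Stdlib Require Import Classical.
Import Order.TTheory GRing.Theory Num.Theory.
Local Open Scope ring_scope.

(* The shifted candidate is the old contingency trajectory advanced by one
   step and then held at the equilibrium [xbar], so every constraint at time
   [t+1] is an instance of the same constraint at time [t].  The safe set is
   either frozen, where (C6)-(C7) are inherited, or shifted to
   [Gamma (x(t+1))] = [Gamma (xc 1)], where they follow from the tail
   containment (C8) anchored at step 1. *)

Lemma freeze_or_shift_cases {T : Type} {P : Prop} {Sfrozen Sshifted Snext : T} :
  (P -> Snext = Sfrozen) /\ (~ P -> Snext = Sshifted) ->
  Snext = Sfrozen \/ Snext = Sshifted.
Proof. by case=> frozen shifted; case: (classic P) => [/frozen|/shifted]; auto. Qed.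

Lemma in_ball_shrunk (R : realType) d (B : ball R d) (p : 'cV[R]_d) (r : R) :
  0 <= r -> enorm (p - bcenter B) <= bradius B - r -> in_ball B p.
Proof. by move=> r0 /le_trans; apply; rewrite gerBl. Qed.

Section ShiftedCandidate.
Variables (R : realType) (n m np : nat).
Variables (f : 'cV[R]_n -> 'cV[R]_m -> 'cV[R]_n) (C : 'M[R]_(np, n)).
Variables (X : 'cV[R]_n -> Prop) (U : 'cV[R]_m -> Prop).
Variables (h : 'cV[R]_np -> R) (r : R) (Gamma : 'cV[R]_n -> ball R np).
Variables (Nc : nat) (xc : nat -> 'cV[R]_n) (uc : nat -> 'cV[R]_m).
Variables (xbar : 'cV[R]_n) (ubar : 'cV[R]_m).
Hypothesis Nc_gt0 : (0 < Nc)%N.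

Lemma shift_xE k : xc Nc = f (xc Nc) ubar -> (k <= Nc)%N ->
  shift_x f Nc xc ubar k = xc (minn k.+1 Nc).
Proof.
move=> xc_eq k_le; rewrite /shift_x; case: ltnP => [k_lt|Nc_le].
  by rewrite (minn_idPl k_lt).
by rewrite (minn_idPr (leqW Nc_le)).
Qed.

Lemma shift_uE k : (k < Nc)%N ->
  shift_u Nc uc ubar k = if (k.+1 < Nc)%N then uc k.+1 else ubar.
Proof. by move=> k_lt; rewrite /shift_u -[in RHS](prednK Nc_gt0) ltnS. Qed.

Lemma contingency_feasible_shift x0 S S' :
  0 <= r ->
  contingency_feasible f C X U h r Gamma Nc x0 S xc uc xbar ubar ->
  S' = S \/ S' = Gamma (xc 1%N) ->
  contingency_feasible f C X U h r Gamma Nc (xc 1%N) S'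
    (shift_x f Nc xc ubar) (shift_u Nc uc ubar) xbar ubar.
Proof.
move=> r_ge0 [_ dyn bnd obst [xc_Nc [equil [Xbar Ubar]]] terminal safe tail] S'E.
have xc_fix : xc Nc = f (xc Nc) ubar by rewrite xc_Nc.
have minn_le k : (minn k.+1 Nc <= Nc)%N := geq_minr _ _.
split.
- by rewrite /shift_x Nc_gt0.
- move=> k k_lt; rewrite shift_uE // /shift_x k_lt.
  case: ltnP => [k1_lt|Nc_le]; first exact: dyn.
  by have -> : k.+1 = Nc by apply/eqP; rewrite eqn_leq k_lt.
- move=> k k_lt; split.
    rewrite /shift_x; case: ltnP => [k1_lt|_]; first by case: (bnd _ k1_lt).
    by rewrite -xc_fix xc_Nc.
  by rewrite shift_uE //; case: ltnP => [/bnd[]|].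
- by move=> k k_le; rewrite shift_xE //; apply: obst.
- by rewrite /shift_x ltnn -xc_fix.
- case: S'E => ->; first exact: terminal.
  rewrite -xc_Nc; apply: in_ball_shrunk r_ge0 _.
  exact: tail.
- move=> k k_le; rewrite shift_xE //.
  by case: S'E => ->; [apply: safe | apply: tail; rewrite ?leq_min ?ltn0Sn].
- move=> k l kl l_le; rewrite !shift_xE //; last exact: leq_trans l_le.
  apply: tail => //.
  by rewrite leq_min geq_minr andbT (leq_trans (geq_minl _ _)).
Qed.

End ShiftedCandidate.

Theorem lemmaA1
  (R : realType) (n m np : nat)
  (f : 'cV[R]_n -> 'cV[R]_m -> 'cV[R]_n) (C : 'M[R]_(np, n))
  (X : 'cV[R]_n -> Prop) (U : 'cV[R]_m -> Prop)
  (r : R) (Gamma : 'cV[R]_n -> ball R np) (h : 'cV[R]_np -> R)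
  (xref : 'cV[R]_n) (Nn Nc : nat)
  (lc : 'cV[R]_n -> 'cV[R]_m -> R) (Vc : 'cV[R]_n -> 'cV[R]_n -> R)
  (Jhat : R)
  (M : nat) (i : 'I_M)
  (Stilde : 'I_M -> ball R np)
  (Sstar : 'I_M -> ball R np)
  (Snext : ball R np)
  (xt xt1 : 'cV[R]_n)
  (xn : nat -> 'cV[R]_n) (un : nat -> 'cV[R]_m)
  (xc : nat -> 'cV[R]_n) (uc : nat -> 'cV[R]_m)
  (xbar : 'cV[R]_n) (ubar : 'cV[R]_m) :
  0 < r -> (0 < Nn)%N -> (0 < Nc)%N ->
  (forall x u, 0 <= lc x u) -> (forall x y, 0 <= Vc x y) -> 0 <= Jhat ->
  nominal_feasible f X U Nn xt xn un uc ->
  contingency_feasible f C X U h r Gamma Nc xt (Sstar i) xc uc xbar ubar ->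
  Jc lc Vc xref Nc xc uc xbar ubar <= Jhat ->
  xt1 = f xt (uc 0%N) ->
  Stilde i = Gamma xt1 ->
  (let chi := exists j, j != i /\
        (balls_meet (Stilde i) (Stilde j) \/ balls_meet (Stilde i) (Sstar j)) in
   (chi -> Snext = Sstar i) /\ (~ chi -> Snext = Stilde i)) ->
  contingency_feasible f C X U h r Gamma Nc xt1 Snext
    (shift_x f Nc xc ubar) (shift_u Nc uc ubar) xbar ubar.
Proof.
move=> r_gt0 _ Nc_gt0 _ _ _ _ feas _ xt1E StildeE fos_rule.
have fos := freeze_or_shift_cases fos_rule.
have xc1E : xc 1%N = xt1 by rewrite (C2 feas) // (C1 feas) xt1E.
rewrite -xc1E; apply: contingency_feasible_shift feas _ => //; first exact: ltW.
by rewrite xc1E -StildeE.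
Qed.
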